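(* Let $\partial(X)$ be a tight cut of a connected bipartite cubic graph $H[A,B]$, with notation chosen so that $X^+\subseteq B$, and let $H_1:=H/\overline{X}\rightarrow\overline{x}$ and $H_2:=H/X\rightarrow x$. Then: (i) for every $a\in X^-$ and $b\in\overline{X}^-$, the pair $(a,b)$ is not $\lambda$-matchable in $H$; (ii) for every $a\in X^-$ and $b\in X^+$, $(a,b)$ is $\lambda$-matchable in $H$ if and only if it is $\lambda$-matchable in $H_1$; (iii) for every $a\in\overline{X}^+$ and $b\in X^+$, $(a,b)$ is $\lambda$-matchable in $H$ if and only if $(\overline{x},b)$ is $\lambda$-matchable in $H_1$ and $(a,x)$ is $\lambda$-matchable in $H_2$.
   Context: Graphs are loopless but may have parallel edges. A cut $C$ of a matching covered graph is tight if $|C\cap M|=1$ for every perfect matching $M$; tight cuts are odd. For an odd cut $\partial(X)$ of a bipartite graph $H[A,B]$, $X^+$ and $X^-$ denote the larger and smaller of $X\cap A$ and $X\cap B$, and $\overline{X}^+,\overline{X}^-$ are defined analogously for $\overline{X}=V(H)-X$ (so with $X^+\subseteq B$ one has $X^-\subseteq A$, $\overline{X}^+\subseteq A$, $\overline{X}^-\subseteq B$). $H/\overline{X}\rightarrow\overline{x}$ denotes $H$ with $\overline{X}$ shrunk to a vertex $\overline{x}$ (similarly $H/X\rightarrow x$); these contractions are bipartite cubic, with $\overline{x}$ in the class of $A$ and $x$ in the class of $B$. For a connected bipartite cubic graph and vertices $a,b$ in different color classes, an $(a,b)$-matching is a spanning subgraph with $a,b$ of degree $3$ and all other vertices of degree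 $1$; $(a,b)$ is $\lambda$-matchable if one exists. *)

From mathcomp Require Import all_boot.
Set Implicit Arguments. Unset Strict Implicit. Unset Printing Implicit Defensive.

Record mgraph := MGraph {
  vert : finType;
  edge : finType;
  endp1 : edge -> vert;
  endp2 : edge -> vert }.

Section Defs.
Variable G : mgraph.

Definition deg (F : {set edge G}) (v : vert G) : nat :=
  #|[set e in F | endp1 e == v]| + #|[set e in F | endp2 e == v]|.

Definition cubic : Prop := forall v, deg setT v = 3.

Definition adj : rel (vert G) := fun u v =>
  [exists e, ((endp1 e == u) && (endp2 e == v)) || ((endp1 e == v) && (endp2 e == u))].

Definition connected : Prop := forall u v, connect adj u v.

Definition bipartite (A : {set vert G}) : Prop :=
  forall e, (endp1 e \in A) != (endp2 e \in A).

Definition perfect_matching (M : {set edge G}) : Prop := forall v, deg M v = 1.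

Definition cut (X : {set vert G}) : {set edge G} :=
  [set e | (endp1 e \in X) != (endp2 e \in X)].

Definition tight_cut (X : {set vert G}) : Prop :=
  [/\ X != set0, X != setT &
     forall M, perfect_matching M -> #|cut X :&: M| = 1].

Definition lambda_matching (a b : vert G) (F : {set edge G}) : Prop :=
  forall v, deg F v = if (v == a) || (v == b) then 3 else 1.

Definition lambda_matchable (a b : vert G) : Prop := exists F, lambda_matching a b F.

End Defs.

(* G / S -> s : shrink S to a single new vertex, represented by [None];
   vertex v outside S is represented by [Some v] (= insub v);
   edges with both ends in S are deleted. *)
Definition contract (G : mgraph) (S : {set vert G}) : mgraph :=
  @MGraph (option {v : vert G | v \notin S})
          {e : edge G | ~~ ((endp1 e \in S) && (endp2 e \in S))}
          (fun e => insub (endp1 (val e)))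
          (fun e => insub (endp2 (val e))).

From mathcomp Require Import all_boot zify.
Set Implicit Arguments. Unset Strict Implicit. Unset Printing Implicit Defensive.

(* By Hall's theorem every edge of a bipartite cubic graph lies in a perfect matching.  For
   a tight cut with |X^-| < |X^+| this rules out edges between X^- and Xbar^+, because a
   perfect matching through such an edge would meet the cut the wrong number of times.
   Hence every edge with an end in X^- stays in X, and counting degrees over X^+ and X^-
   shows that any spanning subgraph F satisfies
     sum_{X^+} deg_F = sum_{X^-} deg_F + |cut(X) & F|;
   in particular |X^+| = |X^-| + 1 and |cut(X)| = 3.  For an (a,b)-matching F this reads
   |cut(X) & F| + 2[a in X] = 1 + 2[b in X], which excludes case (i) and shows that F crosses
   the cut in one edge in case (ii) and in all three in case (iii), so that it contracts to
   the required matchings of H1 and H2.  Conversely, subgraphs that agree on the cut glue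
   together; in case (ii) the outside of X is supplied by a perfect matching through the
   single cut edge, which by tightness meets the cut in that edge only. *)

Lemma sum_card_fibers (E V : finType) (F : {set E}) (f : E -> V) (S : {set V}) :
  \sum_(v in S) #|[set e in F | f e == v]| = #|[set e in F | f e \in S]|.
Proof.
rewrite -[RHS]sum1_card (partition_big f (mem S)) /=; last by move=> e; rewrite inE => /andP[].
apply: eq_bigr => v vS; rewrite sum1_card; apply: eq_card => e.
by rewrite [RHS]unfold_in !inE; case: (f e =P v) => [->|]; rewrite ?vS ?andbT ?andbF.
Qed.

Lemma card_fiber_inj (aT rT : finType) (f : aT -> rT) (M : {set aT}) y :
  {in M &, injective f} -> #|[set x in M | f x == y]| = (y \in f @: M).
Proof.
move=> injf; case: (boolP (y \in f @: M)) => [/imsetP[x xM ->]|yM].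
  apply/eqP/cards1P; exists x; apply/setP => z; rewrite !inE.
  by apply/andP/eqP => [[zM /eqP/injf->]|->]; rewrite ?xM.
apply/eqP; rewrite cards_eq0; apply/eqP/setP => z; rewrite !inE.
by apply/andP => -[zM /eqP fz]; rewrite -fz imset_f in yM.
Qed.

Lemma injective_in_setU (aT rT : finType) (f : aT -> rT) (M1 M2 : {set aT}) :
  {in M1 &, injective f} -> {in M2 &, injective f} -> [disjoint f @: M1 & f @: M2] ->
  {in M1 :|: M2 &, injective f}.
Proof.
move=> inj1 inj2 dis x y; rewrite !inE.
have cross u v : u \in M1 -> v \in M2 -> f u <> f v.
  by move=> uM vM fuv; have := disjointFr dis (imset_f f uM); rewrite fuv imset_f.
case/orP=> xM /orP[]yM fxy; [exact: inj1 | by case: (cross x y) | | exact: inj2].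
by case: (cross y x).
Qed.

(* Hall's theorem for a bipartite multigraph given by the end maps [src] and [dst] of its
   edges; [D] is the set of edges a matching may use. *)
Section Hall.
Variables (E V : finType) (src dst : E -> V).

Definition nbhd (D : {set E}) (S : {set V}) : {set V} := dst @: [set e in D | src e \in S].

Definition hall_condition (D : {set E}) (U : {set V}) : Prop :=
  forall S : {set V}, S \subset U -> #|S| <= #|nbhd D S|.

Definition saturates (U : {set V}) (M : {set E}) : Prop :=
  [/\ {in M &, injective src}, {in M &, injective dst} & src @: M = U].

Lemma saturates1 e : saturates [set src e] [set e].
Proof. by split=> [x y /set1P-> /set1P->|x y /set1P-> /set1P->|]; rewrite ?imset_set1. Qed.

Lemma saturatesU U1 M1 U2 M2 : saturates U1 M1 -> saturates U2 M2 ->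
  [disjoint U1 & U2] -> [disjoint dst @: M1 & dst @: M2] ->
  saturates (U1 :|: U2) (M1 :|: M2).
Proof.
move=> [s1 d1 <-] [s2 d2 <-] disU disW.
by split; [exact: injective_in_setU | exact: injective_in_setU | rewrite imsetU].
Qed.

Lemma nbhdU D S1 S2 : nbhd D (S1 :|: S2) = nbhd D S1 :|: nbhd D S2.
Proof.
rewrite /nbhd; have -> : [set e in D | src e \in S1 :|: S2] =
                         [set e in D | src e \in S1] :|: [set e in D | src e \in S2].
  by apply/setP => e; rewrite !inE -andb_orr.
exact: imsetU.
Qed.

Definition hall_below (U : {set V}) : Prop :=
  forall D' (U' : {set V}), #|U'| < #|U| -> hall_condition D' U' ->
  exists2 M : {set E}, M \subset D' & saturates U' M.

(* A nonempty proper S with |N(S)| = |S| splits the problem: match S into N(S) and U \ S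
   into the complement of N(S); Hall's condition for the latter is that of S' :|: S. *)
Lemma hall_tight D U (S : {set V}) : hall_below U -> hall_condition D U ->
  S \proper U -> S != set0 -> #|nbhd D S| <= #|S| ->
  exists2 M : {set E}, M \subset D & saturates U M.
Proof.
move=> IH hallU ltSU S0 tightS; have sSU := proper_sub ltSU; set N := nbhd D S in tightS *.
have [M1 sM1 satM1] :
    exists2 M : {set E}, M \subset [set e in D | src e \in S] & saturates S M.
  apply: IH => [|S' sS']; first exact: proper_card.
  rewrite /nbhd; have -> : [set e in [set e in D | src e \in S] | src e \in S'] =
                           [set e in D | src e \in S'].
    apply/setP => e; rewrite !inE -andbA.
    by case eS': (src e \in S'); rewrite ?andbF ?(subsetP sS' _ eS').
  exact/hallU/(subset_trans sS').
have [M2 sM2 satM2] :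
    exists2 M : {set E}, M \subset [set e in D | dst e \notin N] & saturates (U :\: S) M.
  apply: IH => [|S' sS'].
    rewrite cardsDS //; have := subset_leq_card sSU; rewrite -card_gt0 in S0; lia.
  have disS : [disjoint S' & S].
    by apply: disjointWl sS' _; rewrite disjoints_subset setDE subsetIr.
  have -> : nbhd [set e in D | dst e \notin N] S' = nbhd D S' :\: N.
    apply/setP => w; apply/imsetP/setDP => [[e]|[/imsetP[e]]].
      by rewrite !inE -andbA => /and3P[eD eN eS'] ->; rewrite eN imset_f // inE eD.
    by rewrite inE => /andP[eD eS'] -> eN; exists e; rewrite // !inE eD eN.
  have := hallU (S' :|: S); rewrite subUset sSU (subset_trans sS' (subsetDl U S)) => /(_ isT).
  rewrite nbhdU -/N cardsU (disjoint_setI0 disS) cards0 subn0.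
  have := cardsUI (nbhd D S') N; have := cardsID N (nbhd D S'); lia.
exists (M1 :|: M2).
  have subD (P : pred E) : [set e in D | P e] \subset D.
    by apply/subsetP => e; rewrite inE => /andP[].
  by rewrite subUset (subset_trans sM1 (subD _)) (subset_trans sM2 (subD _)).
have -> : U = S :|: U :\: S.
  by apply/setP => u; rewrite !inE; case uS: (u \in S); rewrite //= (subsetP sSU).
apply: saturatesU => //; first by rewrite disjoint_sym disjoints_subset setDE subsetIr.
rewrite disjoints_subset; apply/subsetP => _ /imsetP[e eM1 ->]; rewrite inE.
apply/imsetP => -[e' /(subsetP sM2)]; rewrite inE => /andP[_ /negP e'N] eq; apply: e'N.
by rewrite -eq imset_f //; move/subsetP: sM1 => /(_ e eM1).
Qed.

(* If every nonempty proper S has |S| < |N(S)|, any edge e at some u \in U can be used: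
   deleting u and dst e from the problem costs every remaining S at most one neighbour. *)
Lemma hall_loose D U : hall_below U -> hall_condition D U ->
  (forall S : {set V}, S \proper U -> S != set0 -> #|S| < #|nbhd D S|) ->
  exists2 M : {set E}, M \subset D & saturates U M.
Proof.
move=> IH hallU loose.
have [->|[u uU]] := set_0Vmem U.
  by exists set0; rewrite ?sub0set //; split=> [x|x|]; rewrite ?inE ?imset0.
have [e eD eu] : exists2 e, e \in D & src e = u.
  have := hallU [set u]; rewrite sub1set uU cards1 card_gt0 => /(_ isT) /set0Pn[w /imsetP[e]].
  by rewrite !inE => /andP[eD /eqP eu] _; exists e.
have [M' sM' satM'] :
    exists2 M : {set E}, M \subset [set e' in D | dst e' != dst e] & saturates (U :\ u) M.
  apply: IH => [|S sS]; first by rewrite (cardsD1 u U) uU.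
  have [->|S0] := eqVneq S set0; first by rewrite cards0.
  have := loose S (sub_proper_trans sS (properD1 uU)) S0.
  have -> : nbhd [set e' in D | dst e' != dst e] S = nbhd D S :\ dst e.
    apply/setP => w; apply/imsetP/setD1P => [[e']|[ne /imsetP[e']]].
      by rewrite !inE -andbA => /and3P[e'D ne e'S] ->; rewrite ne imset_f // inE e'D.
    by rewrite inE => /andP[e'D e'S] wE; exists e'; rewrite // !inE e'D e'S -wE ne.
  by rewrite (cardsD1 (dst e) (nbhd D S)); case: (dst e \in _) => /=; lia.
exists (e |: M').
  rewrite subUset sub1set eD (subset_trans sM') //.
  by apply/subsetP => e'; rewrite inE => /andP[].
have := saturatesU (saturates1 e) satM'; rewrite eu setD1K //; apply.
  by rewrite disjoints1 !inE eqxx.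
rewrite imset_set1 disjoints1; apply/imsetP => -[e' /(subsetP sM')].
by rewrite inE => /andP[_ /eqP ne] /esym.
Qed.

Theorem hall_matching D U :
  hall_condition D U -> exists2 M : {set E}, M \subset D & saturates U M.
Proof.
have [n] := ubnP #|U|; elim: n D U => // n IH D U /ltnSE-leUn hallU.
have IHU : hall_below U by move=> D' U' ltU'; apply: IH; exact: leq_trans ltU' leUn.
have [/existsP[S /and3P[ltSU S0 tightS]] | /existsPn loose] :=
  boolP [exists S : {set V}, [&& S \proper U, S != set0 & #|nbhd D S| <= #|S|]].
  exact: hall_tight ltSU S0 tightS.
by apply: hall_loose => // S ltSU S0; have := loose S; rewrite ltSU S0 /= -ltnNge.
Qed.

End Hall.

Lemma sum_deg_const (G : mgraph) (F : {set edge G}) k (S : {set vert G}) :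
  (forall v, deg F v = k) -> \sum_(v in S) deg F v = #|S| * k.
Proof. by move=> degF; rewrite -sum_nat_const; apply: eq_bigr. Qed.

Section Bipartite.
Variables (G : mgraph) (A : {set vert G}).
Hypothesis bipA : bipartite A.

Definition Aend (e : edge G) : vert G := if endp1 e \in A then endp1 e else endp2 e.
Definition Bend (e : edge G) : vert G := if endp1 e \in A then endp2 e else endp1 e.

Lemma Aend_in e : Aend e \in A.
Proof.
by rewrite /Aend; case: ifP => // e1A; have := bipA e; rewrite e1A; case: (endp2 e \in A).
Qed.

Lemma Bend_notin e : Bend e \notin A.
Proof.
by rewrite /Bend; case: ifP => e1A; have := bipA e; rewrite e1A ?e1A; case: (endp2 e \in A).
Qed.

Lemma endpE e (v : vert G) :
  ((endp1 e == v) || (endp2 e == v)) = ((Aend e == v) || (Bend e == v)).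
Proof. by rewrite /Aend /Bend; case: ifP => // _; rewrite orbC. Qed.

Lemma cutE (X : {set vert G}) e : (e \in cut X) = ((Aend e \in X) != (Bend e \in X)).
Proof. by rewrite inE /Aend /Bend; case: ifP => // _; rewrite eq_sym. Qed.

Lemma deg_incident (F : {set edge G}) (v : vert G) :
  deg F v = #|[set e in F | (endp1 e == v) || (endp2 e == v)]|.
Proof.
rewrite /deg -cardsUI.
have -> : [set e in F | endp1 e == v] :&: [set e in F | endp2 e == v] = set0.
  apply/setP => e; rewrite !inE andbACA andbb; apply/negbTE/nandP; right.
  by apply/andP => -[/eqP e1 /eqP e2]; move: (bipA e); rewrite e1 e2 eqxx.
by rewrite cards0 addn0; apply: eq_card => e; rewrite !inE andb_orr.
Qed.

Lemma deg_Aend (F : {set edge G}) v : v \in A -> deg F v = #|[set e in F | Aend e == v]|.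
Proof.
move=> vA; rewrite deg_incident; apply: eq_card => e; rewrite !inE endpE.
case: (Bend e =P v) => [eB|]; rewrite ?orbF //.
by rewrite -eB (negbTE (Bend_notin e)) in vA.
Qed.

Lemma deg_Bend (F : {set edge G}) v : v \notin A -> deg F v = #|[set e in F | Bend e == v]|.
Proof.
move=> vB; rewrite deg_incident; apply: eq_card => e; rewrite !inE endpE.
by case: (Aend e =P v) => [eA|] /=; rewrite -?eA ?Aend_in in vB.
Qed.

Lemma sum_deg_Aend (F : {set edge G}) (S : {set vert G}) :
  \sum_(v in S :&: A) deg F v = #|[set e in F | Aend e \in S]|.
Proof.
have -> : [set e in F | Aend e \in S] = [set e in F | Aend e \in S :&: A].
  by apply/setP => e; rewrite !inE Aend_in andbT.
by rewrite -sum_card_fibers; apply: eq_bigr => v /setIP[_ vA]; rewrite deg_Aend.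
Qed.

Lemma sum_deg_Bend (F : {set edge G}) (S : {set vert G}) :
  \sum_(v in S :&: ~: A) deg F v = #|[set e in F | Bend e \in S]|.
Proof.
have -> : [set e in F | Bend e \in S] = [set e in F | Bend e \in S :&: ~: A].
  by apply/setP => e; rewrite !inE Bend_notin andbT.
by rewrite -sum_card_fibers; apply: eq_bigr => v /setIP[_]; rewrite inE => /deg_Bend.
Qed.

Definition cutA (X : {set vert G}) := [set e | (Aend e \in X) && (Bend e \notin X)].
Definition cutB (X : {set vert G}) := [set e | (Bend e \in X) && (Aend e \notin X)].

Lemma card_cutI (X : {set vert G}) F :
  #|cut X :&: F| = #|cutA X :&: F| + #|cutB X :&: F|.
Proof.
have -> : cut X :&: F = (cutA X :&: F) :|: (cutB X :&: F).
  apply/setP => e; rewrite in_setI cutE !inE -andb_orl.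
  by case: (Aend e \in X); case: (Bend e \in X).
rewrite -cardsUI; have -> : cutA X :&: F :&: (cutB X :&: F) = set0.
  apply/setP => e; rewrite !inE.
  by case: (Aend e \in X); case: (Bend e \in X); rewrite ?andbF.
by rewrite cards0 addn0.
Qed.

Lemma sum_deg_balance (X : {set vert G}) F :
  \sum_(v in X :&: ~: A) deg F v + #|cutA X :&: F| =
  \sum_(v in X :&: A) deg F v + #|cutB X :&: F|.
Proof.
rewrite sum_deg_Aend sum_deg_Bend.
have := cardsID [set e | Aend e \in X] [set e in F | Bend e \in X].
have := cardsID [set e | Bend e \in X] [set e in F | Aend e \in X].
have -> : [set e in F | Bend e \in X] :&: [set e | Aend e \in X] =
          [set e in F | Aend e \in X] :&: [set e | Bend e \in X].
  by apply/setP => e; rewrite !inE; case: (e \in F); case: (Aend e \in X); case: (Bend e \in X).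
have -> : [set e in F | Bend e \in X] :\: [set e | Aend e \in X] = cutB X :&: F.
  by apply/setP => e; rewrite !inE; case: (e \in F); case: (Aend e \in X); case: (Bend e \in X).
have -> : [set e in F | Aend e \in X] :\: [set e | Bend e \in X] = cutA X :&: F.
  by apply/setP => e; rewrite !inE; case: (e \in F); case: (Aend e \in X); case: (Bend e \in X).
lia.
Qed.

Hypothesis cubicG : cubic G.

Lemma card_bipartition : #|A| = #|~: A|.
Proof.
have := sum_deg_Aend setT setT; have := sum_deg_Bend setT setT.
rewrite !setTI !(sum_deg_const _ cubicG) => eqB eqA.
have : #|A| * 3 = #|~: A| * 3 by rewrite eqA eqB; apply: eq_card => e; rewrite !inE.
by move/eqP; rewrite eqn_mul2r => /eqP.
Qed.

Lemma perfect_matching_of_saturates M : saturates Aend Bend A M -> perfect_matching M.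
Proof.
move=> [injA injB imA] v.
have cardM : #|M| = #|A| by rewrite -imA card_in_imset.
have imB : Bend @: M = ~: A.
  apply/eqP; rewrite eqEcard card_in_imset // cardM card_bipartition leqnn andbT.
  by apply/subsetP => _ /imsetP[e _ ->]; rewrite inE Bend_notin.
case: (boolP (v \in A)) => vA.
  by rewrite deg_Aend // card_fiber_inj // imA vA.
by rewrite deg_Bend // card_fiber_inj // imB inE vA.
Qed.

(* Double counting: the 3|S| edges at S all end in N(S), whose vertices carry 3 edges each,
   and e0 is one of these edges not coming from S when Bend e0 \in N(S). *)
Lemma cubic_hall_condition e0 :
  hall_condition Aend Bend [set e | (Aend e != Aend e0) && (Bend e != Bend e0)] (A :\ Aend e0).
Proof.
move=> S sS; set ES := [set e in [set: edge G] | Aend e \in S]; set N := Bend @: ES.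
have -> : nbhd Aend Bend [set e | (Aend e != Aend e0) && (Bend e != Bend e0)] S = N :\ Bend e0.
  apply/setP => w; apply/imsetP/setD1P => [[e]|[ne /imsetP[e]]].
    by rewrite !inE => /andP[/andP[_ ne] eS] ->; rewrite ne imset_f // !inE.
  rewrite !inE /= => eS wE; exists e => //; rewrite !inE eS -wE ne !andbT.
  by apply/eqP => eA; move: (subsetP sS _ eS); rewrite eA !inE eqxx.
have cardES : #|ES| = #|S| * 3.
  rewrite -sum_deg_Aend (setIidPl (subset_trans sS (subsetDl _ _))).
  exact: sum_deg_const.
have cardN : #|[set e in [set: edge G] | Bend e \in N]| = #|N| * 3.
  have sNB : N \subset ~: A by apply/subsetP => _ /imsetP[e _ ->]; rewrite inE Bend_notin.
  by rewrite -sum_deg_Bend (setIidPl sNB); exact: sum_deg_const.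
have : #|ES| + (Bend e0 \in N) <= #|[set e in [set: edge G] | Bend e \in N]|.
  have sub : ES \subset [set e in [set: edge G] | Bend e \in N].
    by apply/subsetP => e eS; rewrite !inE /= imset_f.
  case: (boolP (Bend e0 \in N)) => b0N; last by rewrite addn0 subset_leq_card.
  rewrite addn1; apply/proper_card/properP; split=> //.
  exists e0; first by rewrite !inE /= b0N.
  by rewrite !inE /=; apply/negP => /(subsetP sS); rewrite !inE eqxx.
rewrite cardES cardN (cardsD1 (Bend e0) N); case: (Bend e0 \in N) => /=; lia.
Qed.

Lemma perfect_matching_through (e0 : edge G) : exists2 M, perfect_matching M & e0 \in M.
Proof.
have [M' sM' satM'] := hall_matching (@cubic_hall_condition e0).
exists (e0 |: M'); last by rewrite !inE eqxx.
apply: perfect_matching_of_saturates.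
rewrite -(setD1K (Aend_in e0)); apply: saturatesU => //; first exact: saturates1.
  by rewrite disjoints1 !inE eqxx.
rewrite imset_set1 disjoints1; apply/imsetP => -[e /(subsetP sM')].
by rewrite inE => /andP[_ /eqP ne] /esym.
Qed.

End Bipartite.

Lemma cutC (G : mgraph) (X : {set vert G}) : cut (~: X) = cut X.
Proof. by apply/setP => e; rewrite !inE; case: (endp1 e \in X); case: (endp2 e \in X). Qed.

Section Contraction.
Variables (G : mgraph) (S : {set vert G}).
Local Notation GS := (contract S).

Definition restr_edges (F : {set edge G}) : {set edge GS} := [set e' | val e' \in F].
Definition lift_edges (F' : {set edge GS}) : {set edge G} := val @: F'.

Lemma lift_edgesK : cancel lift_edges restr_edges.
Proof. by move=> F'; apply/setP => e'; rewrite inE (mem_imset _ _ val_inj). Qed.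

Lemma card_edges_contract (P : pred (edge G)) :
  #|[set e' : edge GS | P (val e')]| =
  #|[set e | P e && ~~ ((endp1 e \in S) && (endp2 e \in S))]|.
Proof.
rewrite -(card_imset _ val_inj); apply: eq_card => e; rewrite inE.
apply/imsetP/andP => [[[e' eS]]|[Pe eS]]; first by rewrite inE => Pe ->.
by exists (exist _ e eS); rewrite ?inE.
Qed.

Lemma some_insub (u : {v : vert G | v \notin S}) x : (Some u == insub x) = (val u == x).
Proof.
case: insubP => [u' _ <-|xS] /=; first by rewrite (inj_eq val_inj).
by apply/esym/negP => /eqP ux; rewrite -ux (valP u) in xS.
Qed.

Lemma none_insub x : (None == insub x :> option {v : vert G | v \notin S}) = (x \in S).
Proof. by case: insubP => [u' xS _|xS]; [rewrite (negbTE xS) | rewrite (negbNE xS)]. Qed.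

Lemma deg_restr F (x : vert GS) :
  deg (restr_edges F) x =
  #|[set e in F | (insub (endp1 e) == x) && ~~ ((endp1 e \in S) && (endp2 e \in S))]| +
  #|[set e in F | (insub (endp2 e) == x) && ~~ ((endp1 e \in S) && (endp2 e \in S))]|.
Proof.
have fiber (p : edge G -> vert G) :
    #|[set e' in restr_edges F | insub (p (val e')) == x]| =
    #|[set e in F | (insub (p e) == x) && ~~ ((endp1 e \in S) && (endp2 e \in S))]|.
  have -> : [set e' in restr_edges F | insub (p (val e')) == x] =
            [set e' : edge GS | (val e' \in F) && (insub (p (val e')) == x)].
    by apply/setP => e'; rewrite !inE.
  rewrite (card_edges_contract (fun e => (e \in F) && (insub (p e) == x))).
  by apply: eq_card => e; rewrite !inE andbA.
by rewrite /deg -fiber -fiber.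
Qed.

Lemma deg_restr_Some F u : deg (restr_edges F) (Some u) = deg F (val u).
Proof.
rewrite deg_restr /deg; congr (_ + _); apply: eq_card => e.
  rewrite !inE eq_sym some_insub eq_sym.
  by case: (endp1 e =P val u) => [->|]; rewrite ?andbF // (negbTE (valP u)).
rewrite !inE eq_sym some_insub eq_sym.
by case: (endp2 e =P val u) => [->|]; rewrite ?andbF // (negbTE (valP u)) andbF.
Qed.

Lemma deg_restr_None F : deg (restr_edges F) None = #|cut S :&: F|.
Proof.
rewrite deg_restr -(cardsID [set e | endp1 e \in S] (cut S :&: F)).
by congr (_ + _); apply: eq_card => e; rewrite !inE eq_sym none_insub;
  case: (e \in F); case: (endp1 e \in S); case: (endp2 e \in S).
Qed.

Lemma lambda_matching_restr a b F :
  lambda_matching (insub a : vert GS) (insub b) (restr_edges F) <->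
  (forall v, v \notin S -> deg F v = if (v == a) || (v == b) then 3 else 1) /\
  #|cut S :&: F| = if (a \in S) || (b \in S) then 3 else 1.
Proof.
split=> [lamF|[degF cutF] [u|]].
- split=> [v vS|]; last by have := lamF None; rewrite deg_restr_None !none_insub.
  by have := lamF (Some (exist _ v vS)); rewrite deg_restr_Some !some_insub.
- by rewrite deg_restr_Some degF ?(valP u) // !some_insub.
- by rewrite deg_restr_None cutF !none_insub.
Qed.

Lemma lambda_matching_lift a b F' :
  lambda_matching (insub a : vert GS) (insub b) F' <->
  (forall v, v \notin S ->
     deg (lift_edges F') v = if (v == a) || (v == b) then 3 else 1) /\
  #|cut S :&: lift_edges F'| = if (a \in S) || (b \in S) then 3 else 1.
Proof. by rewrite -{1}(lift_edgesK F'); exact: lambda_matching_restr. Qed.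

End Contraction.

Lemma eq_deg (G : mgraph) (F F' : {set edge G}) v :
  (forall e, (endp1 e == v) || (endp2 e == v) -> (e \in F) = (e \in F')) ->
  deg F v = deg F' v.
Proof.
move=> eqF; rewrite /deg; congr (_ + _); apply: eq_card => e; rewrite !inE.
  by case: (endp1 e =P v) => [/eqP ev|]; rewrite ?andbF ?andbT // eqF ?ev.
by case: (endp2 e =P v) => [/eqP ev|]; rewrite ?andbF ?andbT // eqF ?ev ?orbT.
Qed.

Definition glue (G : mgraph) (X : {set vert G}) (F1 F2 : {set edge G}) : {set edge G} :=
  [set e | if (endp1 e \in X) || (endp2 e \in X) then e \in F1 else e \in F2].

Lemma lambda_matching_glue (G : mgraph) (X : {set vert G}) a b (F1 F2 : {set edge G}) :
  cut X :&: F1 = cut X :&: F2 ->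
  (forall v, v \in X -> deg F1 v = if (v == a) || (v == b) then 3 else 1) ->
  (forall v, v \notin X -> deg F2 v = if (v == a) || (v == b) then 3 else 1) ->
  lambda_matching a b (glue X F1 F2).
Proof.
move=> eqcut degF1 degF2 v; case: (boolP (v \in X)) => vX.
  by rewrite -degF1 //; apply: eq_deg => e /orP[]/eqP ev; rewrite inE ev vX ?orbT.
rewrite -degF2 //; apply: eq_deg => e ev; rewrite inE; case: ifP => // eX.
have ecut : e \in cut X.
  by rewrite inE; case/orP: ev eX => /eqP ->; rewrite (negbTE vX) ?orbF //= => ->.
by have := congr1 (fun C : {set edge G} => e \in C) eqcut; rewrite /= !in_setI ecut.
Qed.

Lemma sum_indicator (T : finType) (S : {set T}) a : \sum_(v in S) (v == a) = (a \in S).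
Proof.
case: (boolP (a \in S)) => aS.
  by rewrite (bigD1 a aS) eqxx big1 // => v /andP[_ /negbTE->].
by rewrite big1 // => v vS; case: eqP vS => // ->; rewrite (negbTE aS).
Qed.

Lemma lambda_deg_sum (G : mgraph) (a b : vert G) F (S : {set vert G}) :
  lambda_matching a b F -> a != b ->
  \sum_(v in S) deg F v = #|S| + 2 * (a \in S) + 2 * (b \in S).
Proof.
move=> lamF ab.
rewrite (eq_bigr (fun v => 1 + 2 * (v == a) + 2 * (v == b))); last first.
  move=> v _; rewrite lamF; case: (v =P a) => [->|]; first by rewrite (negbTE ab).
  by case: (v =P b).
by rewrite !big_split /= sum1_card !sum_indicator big1_eq; lia.
Qed.

Section TightCut.
Variables (H : mgraph) (A X : {set vert H}).
Hypotheses (bipA : bipartite A) (cubicH : cubic H) (tightX : tight_cut X).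
Hypothesis ltXAB : #|X :&: A| < #|X :&: ~: A|.

Lemma tight_cutA_eq0 : cutA A X = set0.
Proof.
case: tightX => _ _ tight; apply/eqP; rewrite -subset0; apply/subsetP => e eA.
have [M pmM eM] := perfect_matching_through bipA cubicH e.
have := sum_deg_balance bipA X M; rewrite !(sum_deg_const _ pmM).
have := tight M pmM; rewrite (card_cutI A).
have : 0 < #|cutA A X :&: M| by rewrite card_gt0; apply/set0Pn; exists e; rewrite inE eA eM.
lia.
Qed.

Lemma tight_sum_deg F :
  \sum_(v in X :&: ~: A) deg F v = \sum_(v in X :&: A) deg F v + #|cut X :&: F|.
Proof.
by have := sum_deg_balance bipA X F; rewrite (card_cutI A) tight_cutA_eq0 set0I cards0; lia.
Qed.

Lemma card_XnotA_succ : #|X :&: ~: A| = (#|X :&: A|).+1.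
Proof.
case: tightX => /set0Pn[v _] _ tight.
have [e _] : exists e : edge H, true.
  have : 0 < deg setT v by rewrite cubicH.
  by rewrite addn_gt0 !card_gt0 => /orP[]/set0Pn[e _]; exists e.
have [M pmM _] := perfect_matching_through bipA cubicH e.
by have := tight_sum_deg M; rewrite !(sum_deg_const _ pmM) tight //; lia.
Qed.

Lemma card_tight_cut : #|cut X| = 3.
Proof.
have := tight_sum_deg setT; rewrite !(sum_deg_const _ cubicH) setIT card_XnotA_succ; lia.
Qed.

Lemma lambda_cut_card a b F : lambda_matching a b F -> a \in A -> b \notin A ->
  #|cut X :&: F| + 2 * (a \in X) = 1 + 2 * (b \in X).
Proof.
move=> lamF aA bB; have ab : a != b by apply: contraTneq aA => ->.
have := tight_sum_deg F; rewrite !(lambda_deg_sum _ lamF ab) card_XnotA_succ.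
by rewrite !inE aA (negbTE bB) ?andbT ?andbF; lia.
Qed.

Lemma not_lambda_matchable_out a b :
  a \in X :&: A -> b \in ~: X :&: ~: A -> ~ lambda_matchable a b.
Proof.
move=> /setIP[aX aA] /setIP[]; rewrite !inE => bX bB [F lamF].
by have := lambda_cut_card lamF aA bB; rewrite aX (negbTE bX); lia.
Qed.

Lemma lambda_matchable_in a b : a \in X :&: A -> b \in X :&: ~: A ->
  lambda_matchable a b <-> @lambda_matchable (contract (~: X)) (insub a) (insub b).
Proof.
move=> /setIP[aX aA] /setIP[bX]; rewrite inE => bB.
have abX : (a \in ~: X) || (b \in ~: X) = false by rewrite !inE aX bX.
split=> [[F lamF]|[F' /lambda_matching_lift[degF' cutF']]].
  exists (restr_edges (~: X) F); apply/lambda_matching_restr; split=> [v _|]; first exact: lamF.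
  by rewrite cutC abX; have := lambda_cut_card lamF aA bB; rewrite aX bX; lia.
rewrite cutC abX in cutF'; move/eqP/cards1P: cutF' => [e cutE'].
have /setIP[ecut _] : e \in cut X :&: lift_edges F' by rewrite cutE' set11.
have [M pmM eM] := perfect_matching_through bipA cubicH e.
exists (glue X (lift_edges F') M); apply: lambda_matching_glue => [|v vX|v vX].
- case: tightX => _ _ /(_ M pmM)/eqP/cards1P[e' cutM].
  have : e \in cut X :&: M by rewrite inE ecut eM.
  by rewrite cutM cutE' => /set1P->.
- by apply: degF'; rewrite inE negbK.
- have vab : (v == a) || (v == b) = false.
    by apply/negbTE; apply: contra vX => /orP[]/eqP->.
  by rewrite pmM vab.
Qed.

Lemma lambda_matchable_across a b : a \in ~: X :&: A -> b \in X :&: ~: A ->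
  lambda_matchable a b <->
  @lambda_matchable (contract (~: X)) None (insub b) /\
  @lambda_matchable (contract X) (insub a) None.
Proof.
move=> /setIP[]; rewrite inE => aX aA /setIP[bX]; rewrite inE => bB.
have -> : None = insub a :> vert (contract (~: X)) by rewrite insubN // !inE negbK.
have -> : None = insub b :> vert (contract X) by rewrite insubN // negbK.
split=> [[F lamF]|[[F1 /lambda_matching_lift[degF1 cutF1]]
                    [F2 /lambda_matching_lift[degF2 cutF2]]]].
  have cut3 : #|cut X :&: F| = 3.
    by have := lambda_cut_card lamF aA bB; rewrite (negbTE aX) bX; lia.
  split.
    exists (restr_edges (~: X) F); apply/lambda_matching_restr; split=> [v _|]; first exact: lamF.
    by rewrite cutC cut3 !inE aX.
  exists (restr_edges X F); apply/lambda_matching_restr; split=> [v _|]; first exact: lamF.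
  by rewrite cut3 bX orbT.
have full (F : {set edge H}) : #|cut X :&: F| = 3 -> cut X :&: F = cut X.
  by move=> c3; apply/eqP; rewrite eqEcard subsetIl c3 card_tight_cut.
rewrite cutC !inE aX in cutF1; rewrite bX orbT in cutF2.
exists (glue X (lift_edges F1) (lift_edges F2)); apply: lambda_matching_glue => [|v vX|v vX].
- by rewrite (full _ cutF1) (full _ cutF2).
- by apply: degF1; rewrite inE negbK.
- exact: degF2.
Qed.

End TightCut.

Theorem lemma2p2 (H : mgraph) (A X : {set vert H}) :
  connected H -> cubic H -> bipartite A ->
  tight_cut X ->
  (* notation chosen so that X^+ = X :&: ~: A ⊆ B, X^- = X :&: A *)
  #|X :&: A| < #|X :&: ~: A| ->
  let H1 := contract (~: X) in   (* H / Xbar -> xbar, xbar = None *)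
  let H2 := contract X in        (* H / X -> x, x = None *)
  (* (i) a ∈ X^-, b ∈ Xbar^- *)
  (forall a b, a \in X :&: A -> b \in ~: X :&: ~: A ->
     ~ lambda_matchable a b) /\
  (* (ii) a ∈ X^-, b ∈ X^+ *)
  (forall a b, a \in X :&: A -> b \in X :&: ~: A ->
     lambda_matchable a b <-> @lambda_matchable H1 (insub a) (insub b)) /\
  (* (iii) a ∈ Xbar^+, b ∈ X^+ *)
  (forall a b, a \in ~: X :&: A -> b \in X :&: ~: A ->
     lambda_matchable a b <->
     (@lambda_matchable H1 None (insub b) /\ @lambda_matchable H2 (insub a) None)).
Proof.
move=> _ cubicH bipA tightX ltXAB H1 H2.
split; last split.
- exact: not_lambda_matchable_out.
- exact: lambda_matchable_in.
- exact: lambda_matchable_across.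
Qed.
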